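(* Let $y_1, \ldots, y_n \in \mathfrak m$ be a minimal system of generators of $\mathfrak m$, so $R = k[[y_1, \ldots, y_n]]$, and let $\widetilde y_1, \ldots, \widetilde y_n \in R$ be elements with $y_i \equiv \widetilde y_i \pmod{t^{a_n+1}}$ (i.e. $v(y_i - \widetilde y_i) \ge a_n + 1$) for all $i$. Then $R = k[[\widetilde y_1, \ldots, \widetilde y_n]]$.
   Context: Let $k$ be a field and let $(R,\mathfrak m)$ be a complete local noetherian domain of dimension $1$ containing $k$ with $R/\mathfrak m = k$, with normalization $\overline R$ having residue field $k$, so $\overline R = k[[t]]$ and $R \subseteq k[[t]]$ is finite birational. Let $v$ be the $t$-adic valuation, $v(0)=\infty$. For $A \subseteq k((t))$ let $v(A) = \{v(f): f\in A\setminus\{0\}\}$. The Herzog–Kunz sequence of $R$ is $v(\mathfrak m)\setminus v(\mathfrak m^2)$ listed increasingly as $a_1 < \cdots < a_n$ (with $n = \mathrm{edim}(R)$). For $y_i\in\mathfrak m$, $k[[y_1,\ldots,y_n]]$ is the image of $k[[Y_1,\ldots,Y_n]]\to k[[t]]$, $Y_i\mapsto y_i$. *)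

From Stdlib Require List.
From mathcomp Require Import all_boot all_algebra.
Set Implicit Arguments. Unset Strict Implicit. Unset Printing Implicit Defensive.
Import GRing.Theory.
Local Open Scope ring_scope.

(* an element of k[[t]]: f = sum_m f m * t^m *)
Definition series (k : fieldType) := nat -> k.

Section Series.
Variable k : fieldType.

Definition szero : series k := fun _ => 0.
Definition sone : series k := fun m => (m == 0%N)%:R.
Definition svar : series k := fun m => (m == 1%N)%:R.
Definition sadd (f g : series k) : series k := fun m => f m + g m.
Definition ssub (f g : series k) : series k := fun m => f m - g m.
Definition smul (f g : series k) : series k :=
  fun m => \sum_(i < m.+1) f i * g (m - i)%N.
Definition sexp (f : series k) (e : nat) : series k := iter e (smul f) sone.

Definition val_ge (f : series k) (a : nat) : Prop := forall j, (j < a)%N -> f j = 0.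
Definition has_val (f : series k) (a : nat) : Prop := val_ge f a /\ f a != 0.

Definition smonom (n : nat) (y : 'I_n -> series k) (e : 'I_n -> nat) : series k :=
  foldr (fun i acc => smul (sexp (y i) (e i)) acc) sone (enum 'I_n).

(* F(y_1,...,y_n) for F in k[[Y_1,...,Y_n]] (coefficients indexed by exponent
   vectors) and y_i with zero constant term: the coefficient of t^m only involves
   monomials whose exponents are all <= m. *)
Definition ssubst (n : nat) (F : {ffun 'I_n -> nat} -> k) (y : 'I_n -> series k)
  : series k :=
  fun m => \sum_(e : {ffun 'I_n -> 'I_m.+1})
             F [ffun i => nat_of_ord (e i)] * smonom y (fun i => nat_of_ord (e i)) m.

Definition in_kpow (n : nat) (y : 'I_n -> series k) (f : series k) : Prop :=
  exists F : {ffun 'I_n -> nat} -> k, f =1 ssubst F y.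

(* maximal ideal of a local subring R of k[[t]] with residue field k *)
Definition maxideal (R : series k -> Prop) (f : series k) : Prop := R f /\ f 0%N = 0.

Definition maxideal2 (R : series k -> Prop) (f : series k) : Prop :=
  exists s : seq (series k * series k),
    (forall p, List.In p s -> maxideal R p.1 /\ maxideal R p.2) /\
    f =1 foldr (fun p acc => sadd (smul p.1 p.2) acc) szero s.

Definition in_valset (A : series k -> Prop) (a : nat) : Prop :=
  exists f, A f /\ has_val f a.

Definition herzog_kunz (R : series k -> Prop) (a : nat) : Prop :=
  in_valset (maxideal R) a /\ ~ in_valset (maxideal2 R) a.

Definition in_ideal_gen (R : series k -> Prop) (n : nat) (P : pred 'I_n)
  (y : 'I_n -> series k) (f : series k) : Prop :=
  exists r : 'I_n -> series k, (forall i, R (r i)) /\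
    f =1 foldr (fun i acc => sadd (smul (r i) (y i)) acc) szero
           [seq i <- enum 'I_n | P i].

Definition minimal_generators (R : series k -> Prop) (n : nat)
  (y : 'I_n -> series k) : Prop :=
  (forall i, maxideal R (y i)) /\
  (forall f, maxideal R f -> in_ideal_gen R predT y f) /\
  (forall j : 'I_n, ~ (forall f, maxideal R f -> in_ideal_gen R (fun i => i != j) y f)).

Definition finite_over (R : series k -> Prop) : Prop :=
  exists (p : nat) (b : 'I_p -> series k), forall h : series k,
    exists r : 'I_p -> series k, (forall i, R (r i)) /\
      h =1 foldr (fun i acc => sadd (smul (r i) (b i)) acc) szero (enum 'I_p).

(* R subset k[[t]] is birational: every element of k[[t]] (hence of k((t)))
   is a quotient of elements of R *)
Definition birational (R : series k -> Prop) : Prop :=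
  forall h : series k, exists f g, R f /\ R g /\ ~ (g =1 szero) /\ f =1 smul h g.

End Series.

(* Let V_d be the set of series F(y) with F in k[[Y]] of order at least d, so that R = V_0
   and m = V_1.  Birationality yields u, w in m of values b and b + 1; their monomials have
   every value N >= b^2 at Y-order about N / b, so greedy cancellation of leading terms
   converges and t^C k[[t]] lies in R for some C > 0.  Since a_n is the largest value of m
   that is not a value of m^2, the leading term of an element of m of value > a_n can be
   cancelled by an element of m^2 until the value exceeds 2C, and then it is t^C times an
   element of t^C k[[t]]; hence y_i - ỹ_i lies in m^2, inside V_2.  Then y^e - ỹ^e lies in
   V_(|e|+1), and replacing the homogeneous parts of F(y) by their values at ỹ degree by
   degree gives R in k[[ỹ]].  Conversely F(ỹ) is a polynomial in the ỹ_i, which lie in R,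
   plus a series of value >= C. *)

From HB Require Import structures.
From mathcomp Require Import all_boot all_algebra.
From mathcomp Require Import boolp zify.
Set Implicit Arguments. Unset Strict Implicit. Unset Printing Implicit Defensive.
Import GRing.Theory.
Local Open Scope ring_scope.

Section PowerSeriesRing.
Variable k : fieldType.

Definition fps := series k.
HB.instance Definition _ := Choice.copy fps (nat -> k).

Definition sopp (f : series k) : series k := fun m => - f m.

Lemma saddA : associative (@sadd k).
Proof. by move=> f g h; apply: funext => m; rewrite /sadd addrA. Qed.
Lemma saddC : commutative (@sadd k).
Proof. by move=> f g; apply: funext => m; rewrite /sadd addrC. Qed.
Lemma add0s : left_id (@szero k) (@sadd k).
Proof. by move=> f; apply: funext => m; rewrite /sadd /szero add0r. Qed.
Lemma addNs : left_inverse (@szero k) sopp (@sadd k).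
Proof. by move=> f; apply: funext => m; rewrite /sadd /szero /sopp addNr. Qed.

HB.instance Definition _ := GRing.isZmodule.Build fps saddA saddC add0s addNs.

(* Associativity of [smul] is read off from [{poly k}] through truncations. *)
Definition spoly (f : series k) (N : nat) : {poly k} := \poly_(i < N) f i.

Lemma smul_spolyE f g N m : (m < N)%N -> smul f g m = (spoly f N * spoly g N)`_m.
Proof.
move=> mN; rewrite coefM /smul; apply: eq_bigr => i _; rewrite /spoly !coef_poly.
by rewrite (leq_ltn_trans (leq_ord i) mN) (leq_ltn_trans (leq_subr i m) mN).
Qed.

Lemma coefM_agree (p q p' q' : {poly k}) m :
  (forall i, (i <= m)%N -> p`_i = p'`_i) -> (forall i, (i <= m)%N -> q`_i = q'`_i) ->
  (p * q)`_m = (p' * q')`_m.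
Proof.
move=> hp hq; rewrite !coefM; apply: eq_bigr => i _.
by rewrite hp ?hq // ?leq_subr // -ltnS.
Qed.

Lemma spoly_smul f g m i : (i <= m)%N ->
  (spoly (smul f g) m.+1)`_i = (spoly f m.+1 * spoly g m.+1)`_i.
Proof.
move=> im; rewrite /spoly coef_poly ltnS im (@smul_spolyE _ _ i.+1) //.
by apply: coefM_agree => j ji; rewrite !coef_poly !ltnS ji (leq_trans ji im).
Qed.

Lemma smulA : associative (@smul k).
Proof.
move=> f g h; apply: funext => m.
rewrite (smul_spolyE _ _ (ltnSn m)) [smul (smul f g) h m](smul_spolyE _ _ (ltnSn m)).
transitivity ((spoly f m.+1 * (spoly g m.+1 * spoly h m.+1))`_m).
  by apply: coefM_agree => // i; apply: spoly_smul.
by rewrite mulrA; symmetry; apply: coefM_agree => // i; apply: spoly_smul.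
Qed.

Lemma smulC : commutative (@smul k).
Proof. by move=> f g; apply: funext => m; rewrite !(smul_spolyE _ _ (ltnSn m)) mulrC. Qed.

Lemma mul1s : left_id (@sone k) (@smul k).
Proof.
move=> f; apply: funext => m; rewrite /smul big_ord_recl /= /sone eqxx mul1r subn0.
by rewrite big1 ?addr0 // => i _; rewrite mul0r.
Qed.

Lemma smulDl : left_distributive (@smul k) (@sadd k).
Proof.
move=> f g h; apply: funext => m; rewrite /smul /sadd -big_split /=.
by apply: eq_bigr => i _; rewrite mulrDl.
Qed.

Lemma sone_neq0 : (sone k : fps) != 0.
Proof. by apply/eqP => /(congr1 (fun f : fps => f 0%N)) /eqP; rewrite /sone /= oner_eq0. Qed.

HB.instance Definition _ :=
  GRing.Zmodule_isComNzRing.Build fps smulA smulC mul1s smulDl sone_neq0.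

Lemma fps_oneE : (1 : fps) = sone k. Proof. by []. Qed.

Lemma fps_coef_sum I (r : seq I) (P : pred I) (F : I -> fps) m :
  (\sum_(i <- r | P i) F i) m = \sum_(i <- r | P i) F i m.
Proof. by elim/big_rec2: _ => // i y1 y2 _ <-. Qed.
Lemma fps_coefD (f g : fps) m : (f + g) m = f m + g m. Proof. by []. Qed.
Lemma fps_coefN (f : fps) m : (- f) m = - f m. Proof. by []. Qed.
Lemma fps_coefB (f g : fps) m : (f - g) m = f m - g m. Proof. by []. Qed.
Lemma fps_coefM (f g : fps) m : (f * g) m = \sum_(i < m.+1) f i * g (m - i)%N.
Proof. by []. Qed.

Lemma sexpE (f : series k) e : sexp f e = (f : fps) ^+ e.
Proof. by elim: e => [|e ih] //=; rewrite exprS -ih. Qed.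

Definition sconst (c : k) : fps := fun m => if m == 0%N then c else 0.

Lemma sconst0 : sconst 0 = 0.
Proof. by apply: funext => -[]. Qed.

Lemma sconstME c (f : fps) m : (sconst c * f) m = c * f m.
Proof.
rewrite fps_coefM big_ord_recl /= subn0 big1 ?addr0 // => i _.
by rewrite /sconst /= mul0r.
Qed.

Lemma coef_svarM (f : fps) m : ((svar k : fps) * f) m = if m is j.+1 then f j else 0.
Proof.
rewrite fps_coefM big_ord_recl /svar /= mul0r add0r; case: m => [|m]; first by rewrite big_ord0.
rewrite big_ord_recl /= mul1r subSS subn0 big1 ?addr0 // => i _.
by rewrite /bump /= mul0r.
Qed.

Lemma coef_svarXM C (f : fps) m :
  ((svar k : fps) ^+ C * f) m = if (C <= m)%N then f (m - C)%N else 0.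
Proof.
elim: C f m => [|C ih] f m; first by rewrite expr0 mul1r subn0.
by rewrite exprS -mulrA coef_svarM; case: m => [|m] //; rewrite ih ltnS subSS.
Qed.

Lemma val_geW (f : fps) a b : (b <= a)%N -> val_ge f a -> val_ge f b.
Proof. by move=> ba hf j hj; apply: hf; apply: leq_trans hj ba. Qed.

Lemma val_geM (f g : fps) a b : val_ge f a -> val_ge g b -> val_ge (f * g) (a + b).
Proof.
move=> hf hg j hj; rewrite fps_coefM big1 // => i _.
case: (ltnP i a) => ia; first by rewrite hf // mul0r.
by rewrite hg ?mulr0 //; have := ltn_ord i; lia.
Qed.

Lemma val_geX (f : fps) a p : val_ge f a -> val_ge (f ^+ p) (a * p).
Proof.
move=> hf; elim: p => [|p ih]; first by rewrite muln0.
by rewrite exprS mulnS; apply: val_geM.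
Qed.

Lemma coefM_val (f g : fps) a b : val_ge f a -> val_ge g b ->
  (f * g) (a + b)%N = f a * g b.
Proof.
move=> hf hg; have ha : (a < (a + b).+1)%N by rewrite ltnS leq_addr.
rewrite fps_coefM (bigD1 (Ordinal ha)) //= addKn big1 ?addr0 // => i /eqP hi.
case: (ltnP i a) => ia; first by rewrite hf // mul0r.
have ai : (a < i)%N.
  by rewrite ltn_neqAle ia andbT eq_sym; apply/eqP => h; apply: hi; apply: val_inj.
by rewrite hg ?mulr0 //; have := ltn_ord i; lia.
Qed.

Lemma has_valM (f g : fps) a b : has_val f a -> has_val g b -> has_val (f * g) (a + b).
Proof.
move=> [hf fa] [hg gb]; split; first exact: val_geM.
by rewrite coefM_val // mulf_neq0.
Qed.

Lemma has_valX (f : fps) a p : has_val f a -> has_val (f ^+ p) (a * p).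
Proof.
move=> hf; elim: p => [|p ih]; last by rewrite exprS mulnS; apply: has_valM.
by rewrite muln0 expr0; split => //; rewrite fps_oneE /sone /= oner_neq0.
Qed.

Lemma has_val_svar : has_val (svar k) 1.
Proof. by split; [case | rewrite /svar /= oner_neq0]. Qed.

End PowerSeriesRing.

Section Substitution.
Variables (k : fieldType) (n : nat).
Local Notation fps := (fps k).

Definition expo := {ffun 'I_n -> nat}.
Definition expo_of N (e : {ffun 'I_n -> 'I_N}) : expo := [ffun i => nat_of_ord (e i)].
Definition deg (e : expo) : nat := (\sum_i e i)%N.

Definition box_sum N (X : expo -> k) : k := \sum_(e : {ffun 'I_n -> 'I_N}) X (expo_of e).

Lemma expo_le_deg (e : expo) i : (e i <= deg e)%N.
Proof. by rewrite /deg (bigD1 i) //= leq_addr. Qed.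

Lemma deg_enum (e : expo) : (\sum_(i <- enum 'I_n) e i)%N = deg e.
Proof. by rewrite /deg big_enum. Qed.

Lemma deg_eq0 (e : expo) : deg e = 0%N -> e = [ffun => 0%N].
Proof.
by move=> h; apply/ffunP => i; rewrite ffunE; have := expo_le_deg e i; rewrite h leqn0 => /eqP.
Qed.

Lemma box_sum_widen N K X : (K.+1 <= N)%N ->
  (forall e : expo, (exists i, K.+1 <= e i)%N -> X e = 0) -> box_sum N X = box_sum K.+1 X.
Proof.
move=> KN hX; rewrite /box_sum.
rewrite (bigID (fun e : {ffun 'I_n -> 'I_N} => [forall i, e i < K.+1]%N)) /=.
rewrite [X in _ + X]big1 ?addr0; last first.
  move=> e; rewrite negb_forall => /existsP [i]; rewrite -leqNgt => hi.
  by apply: hX; exists i; rewrite ffunE.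
pose wide := fun e : {ffun 'I_n -> 'I_K.+1} => [ffun i => widen_ord KN (e i)].
pose narrow := fun e : {ffun 'I_n -> 'I_N} => [ffun i => (inord (e i) : 'I_K.+1)].
rewrite (reindex_onto wide narrow) /=; last first.
  by move=> e /forallP he; apply/ffunP => i; rewrite !ffunE; apply: val_inj; rewrite /= inordK.
apply: eq_big => [e|e _]; last by congr X; apply/ffunP => i; rewrite !ffunE.
apply/andP; split; first by apply/forallP => i; rewrite ffunE /=.
by apply/eqP/ffunP => i; rewrite !ffunE; apply: val_inj; rewrite /= inordK.
Qed.

Lemma box_sum_eq K K' X : (forall e : expo, (exists i, K.+1 <= e i)%N -> X e = 0) ->
  (forall e : expo, (exists i, K'.+1 <= e i)%N -> X e = 0) ->
  box_sum K.+1 X = box_sum K'.+1 X.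
Proof.
move=> h1 h2; case: (leqP K K') => kk; first by rewrite (@box_sum_widen K'.+1 K).
by rewrite (@box_sum_widen K.+1 K') // ltnW.
Qed.

Lemma box_sum_pick N (x : expo) (Y : expo -> k) :
  box_sum N.+1 (fun e => if e == x then Y e else 0) =
  if [forall i, x i < N.+1]%N then Y x else 0.
Proof.
rewrite /box_sum; case: ifP => hx; last first.
  rewrite big1 // => e _; case: eqP => // hex; move/negbT: hx; rewrite negb_forall.
  by case/existsP => i; rewrite -hex ffunE ltn_ord.
pose xN : {ffun 'I_n -> 'I_N.+1} := [ffun i => inord (x i)].
have xNE : expo_of xN = x.
  by apply/ffunP => i; rewrite !ffunE inordK //; move/forallP: hx; apply.
rewrite (bigD1 xN) //= xNE eqxx big1 ?addr0 // => e he.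
case: eqP => // hex; case/eqP: he; apply/ffunP => i.
by apply: val_inj; rewrite ffunE /= -hex ffunE inordK.
Qed.

Definition ord_ge (F : expo -> k) d := forall e, (deg e < d)%N -> F e = 0.

Definition expo_add (e1 e2 : expo) : expo := [ffun i => (e1 i + e2 i)%N].

Lemma deg_add e1 e2 : deg (expo_add e1 e2) = (deg e1 + deg e2)%N.
Proof. by rewrite /deg -big_split /=; apply: eq_bigr => i _; rewrite ffunE. Qed.

Lemma expo_add_neq (e1 e2 e : expo) i :
  (e i < e1 i)%N \/ (e i < e2 i)%N -> (expo_add e1 e2 == e) = false.
Proof. by move=> h; apply/negbTE/eqP => he; move: h; rewrite -he ffunE; lia. Qed.

(* Product in k[[Y_1,...,Y_n]]; all pairs with [e1 + e2 = e] lie in the box of side [deg e + 1]. *)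
Definition mmul (F G : expo -> k) (e : expo) : k :=
  box_sum (deg e).+1 (fun e1 => box_sum (deg e).+1 (fun e2 =>
    if expo_add e1 e2 == e then F e1 * G e2 else 0)).

Lemma mmul_box (F G : expo -> k) (e : expo) m : (forall i, e i <= m)%N ->
  mmul F G e = box_sum m.+1 (fun e1 => box_sum m.+1 (fun e2 =>
    if expo_add e1 e2 == e then F e1 * G e2 else 0)).
Proof.
move=> hm.
have out_deg i (f : expo) : ((deg e).+1 <= f i)%N -> (e i < f i)%N.
  exact: leq_ltn_trans (expo_le_deg e i).
have out_m i (f : expo) : (m.+1 <= f i)%N -> (e i < f i)%N by apply: leq_ltn_trans (hm i).
rewrite /mmul; transitivity (box_sum (deg e).+1 (fun e1 => box_sum m.+1 (fun e2 =>
    if expo_add e1 e2 == e then F e1 * G e2 else 0))).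
  apply: eq_bigr => e1 _; apply: box_sum_eq => e2 [i hi];
  by rewrite (@expo_add_neq _ _ _ i) //; right; solve [exact: out_deg hi | exact: out_m hi].
apply: box_sum_eq => e1 [i hi]; rewrite /box_sum big1 // => e2 _;
by rewrite (@expo_add_neq _ _ _ i) //; left; solve [exact: out_deg hi | exact: out_m hi].
Qed.

Lemma ord_geM F G a b : ord_ge F a -> ord_ge G b -> ord_ge (mmul F G) (a + b).
Proof.
move=> hF hG e he; rewrite /mmul /box_sum big1 // => e1 _; rewrite big1 // => e2 _.
case: eqP => // he12.
have hlt : (deg (expo_of e1) + deg (expo_of e2) < a + b)%N by rewrite -deg_add he12.
case: (ltnP (deg (expo_of e1)) a) => h1; first by rewrite hF ?mul0r.
by rewrite hG ?mulr0 //; lia.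
Qed.

Variable z : 'I_n -> fps.
Hypothesis z0 : forall i, z i 0%N = 0.

Lemma smonomE (e : 'I_n -> nat) : smonom z e = \prod_(i <- enum 'I_n) (z i) ^+ (e i).
Proof.
rewrite /smonom; elim: (enum 'I_n) => [|i s ih] /=; first by rewrite big_nil.
by rewrite big_cons -ih sexpE.
Qed.

Lemma smonom_add e1 e2 : (smonom z (expo_add e1 e2) : fps) = (smonom z e1 : fps) * smonom z e2.
Proof. by rewrite !smonomE -big_split /=; apply: eq_bigr => i _; rewrite ffunE exprD. Qed.

Lemma smonom0 : (smonom z [ffun => 0%N] : fps) = 1.
Proof. by rewrite smonomE big1 // => i _; rewrite ffunE expr0. Qed.

Lemma val_ge_smonom (e : expo) : val_ge (smonom z e) (deg e).
Proof.
rewrite smonomE -deg_enum; elim: (enum 'I_n) => [|i s ih]; first by rewrite !big_nil.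
rewrite !big_cons; apply: val_geM => //.
by rewrite -{2}[e i]mul1n; apply: val_geX => -[].
Qed.

Lemma smonom_coef_deg (e : expo) m i : (m < e i)%N -> smonom z e m = 0.
Proof. by move=> h; apply: val_ge_smonom; apply: leq_trans h (expo_le_deg e i). Qed.

Lemma ssubstE (F : expo -> k) m :
  ssubst F z m = box_sum m.+1 (fun e => F e * smonom z e m).
Proof.
rewrite /ssubst /box_sum; apply: eq_bigr => e _; congr (_ * smonom _ _ _).
by apply: funext => i; rewrite ffunE.
Qed.

Lemma ssubst_box (F : expo -> k) m N : (m < N)%N ->
  ssubst F z m = box_sum N (fun e => F e * smonom z e m).
Proof.
move=> mN; rewrite ssubstE; case: N mN => // N mN.
apply: box_sum_eq => e [i hi]; rewrite (@smonom_coef_deg e m i) ?mulr0 //.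
by apply: leq_trans mN hi.
Qed.

Lemma ssubst0 : (ssubst (fun _ => 0) z : fps) = 0.
Proof. by apply: funext => m; rewrite ssubstE /box_sum big1 // => e _; rewrite mul0r. Qed.

Lemma ssubstD (F G : expo -> k) :
  ssubst (fun e => F e + G e) z = (ssubst F z : fps) + (ssubst G z : fps).
Proof.
apply: funext => m; rewrite fps_coefD !ssubstE /box_sum -big_split /=.
by apply: eq_bigr => e _; rewrite mulrDl.
Qed.

Lemma ssubstN (F : expo -> k) : ssubst (fun e => - F e) z = - (ssubst F z : fps).
Proof.
apply: funext => m; rewrite fps_coefN !ssubstE /box_sum -sumrN.
by apply: eq_bigr => e _; rewrite mulNr.
Qed.

Lemma ssubstZ c (F : expo -> k) : ssubst (fun e => c * F e) z = sconst c * (ssubst F z : fps).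
Proof.
apply: funext => m; rewrite sconstME !ssubstE /box_sum mulr_sumr.
by apply: eq_bigr => e _; rewrite mulrA.
Qed.

Lemma ssubst_sum J (F : nat -> expo -> k) :
  ssubst (fun e => \sum_(j < J) F j e) z = \sum_(j < J) (ssubst (F j) z : fps).
Proof.
elim: J => [|J ih].
  by rewrite big_ord0 -ssubst0; congr ssubst; apply: funext => e; rewrite big_ord0.
rewrite big_ord_recr /= -ih -ssubstD; congr ssubst; apply: funext => e.
by rewrite big_ord_recr.
Qed.

Lemma ssubstM (F G : expo -> k) :
  (ssubst (mmul F G) z : fps) = (ssubst F z : fps) * (ssubst G z : fps).
Proof.
apply: funext => m.
transitivity (box_sum m.+1 (fun e1 => box_sum m.+1 (fun e2 =>
    F e1 * G e2 * smonom z (expo_add e1 e2) m))).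
  rewrite ssubstE.
  transitivity (box_sum m.+1 (fun e => box_sum m.+1 (fun e1 => box_sum m.+1 (fun e2 =>
       if expo_add e1 e2 == e then F e1 * G e2 * smonom z e m else 0)))).
    apply: eq_bigr => e _; rewrite (@mmul_box _ _ _ m); last by move=> i; rewrite ffunE -ltnS.
    rewrite /box_sum mulr_suml; apply: eq_bigr => e1 _; rewrite mulr_suml.
    by apply: eq_bigr => e2 _; case: ifP; rewrite ?mul0r.
  rewrite /box_sum exchange_big; apply: eq_bigr => e1 _.
  rewrite exchange_big; apply: eq_bigr => e2 _.
  transitivity (box_sum m.+1 (fun e => if e == expo_add (expo_of e1) (expo_of e2) then
       F (expo_of e1) * G (expo_of e2) * smonom z e m else 0)).
    by apply: eq_bigr => e _; rewrite eq_sym.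
  rewrite box_sum_pick; case: ifP => // /negbT; rewrite negb_forall => /existsP [i].
  by rewrite -leqNgt => hi; rewrite (smonom_coef_deg hi) mulr0.
rewrite fps_coefM.
transitivity (\sum_(i < m.+1) box_sum m.+1 (fun e1 => box_sum m.+1 (fun e2 =>
   F e1 * G e2 * (smonom z e1 i * smonom z e2 (m - i)%N)))).
  symmetry; rewrite /box_sum exchange_big; apply: eq_bigr => e1 _.
  rewrite exchange_big; apply: eq_bigr => e2 _.
  by rewrite smonom_add fps_coefM mulr_sumr.
apply: eq_bigr => i _.
rewrite (@ssubst_box F i m.+1) // (@ssubst_box G (m - i) m.+1) ?ltnS ?leq_subr //.
rewrite /box_sum mulr_suml; apply: eq_bigr => e1 _; rewrite mulr_sumr.
by apply: eq_bigr => e2 _; rewrite mulrACA.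
Qed.

Lemma ssubst_delta (x : expo) :
  (ssubst (fun e => if e == x then 1 else 0) z : fps) = smonom z x.
Proof.
apply: funext => m; rewrite (@ssubst_box _ m (m + deg x).+1) ?ltnS ?leq_addr //.
transitivity (box_sum (m + deg x).+1 (fun e => if e == x then smonom z e m else 0)).
  by apply: eq_bigr => e _; case: eqP; rewrite ?mul1r ?mul0r.
rewrite box_sum_pick; case: ifP => // /negbT; rewrite negb_forall => /existsP [i].
by rewrite ltnS -ltnNge; have := expo_le_deg x i; lia.
Qed.

Lemma ssubst_coef0 (F : expo -> k) : ssubst F z 0%N = F [ffun => 0%N].
Proof.
rewrite ssubstE /box_sum (bigD1 [ffun => ord0]) //= big1 ?addr0.
  have -> : expo_of [ffun => (ord0 : 'I_1)] = [ffun => 0%N] by apply/ffunP => i; rewrite !ffunE.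
  by rewrite smonom0 fps_oneE /sone mulr1.
move=> e /eqP []; apply/ffunP => i; rewrite ffunE; apply: val_inj; by case: (e i) => -[].
Qed.

Lemma ssubst_coef_eq (F G : expo -> k) m : (forall e, (deg e <= m)%N -> F e = G e) ->
  ssubst F z m = ssubst G z m.
Proof.
move=> h; rewrite !ssubstE; apply: eq_bigr => e _.
case: (leqP (deg (expo_of e)) m) => hd; first by rewrite h.
by rewrite val_ge_smonom ?mulr0.
Qed.

Lemma val_ge_ssubst F d : ord_ge F d -> val_ge (ssubst F z) d.
Proof.
move=> h m md; rewrite ssubstE /box_sum big1 // => e _.
case: (ltnP (deg (expo_of e)) d) => hd; first by rewrite h ?mul0r.
by rewrite val_ge_smonom ?mulr0 //; apply: leq_trans md hd.
Qed.

Lemma ssubst_poly (F : expo -> k) N :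
  (forall e : expo, (exists i, N.+1 <= e i)%N -> F e = 0) ->
  (ssubst F z : fps) =
  \sum_(e : {ffun 'I_n -> 'I_N.+1}) sconst (F (expo_of e)) * (smonom z (expo_of e) : fps).
Proof.
move=> hF; apply: funext => m; rewrite fps_coef_sum ssubstE.
under [RHS]eq_bigr do rewrite sconstME.
apply: box_sum_eq => e [i hi]; first by rewrite (smonom_coef_deg hi) mulr0.
by rewrite hF ?mul0r //; exists i.
Qed.

Definition in_kpow_ge d (g : fps) := exists F, ord_ge F d /\ g = ssubst F z.

Lemma in_kpow_ge0 d : in_kpow_ge d 0.
Proof. by exists (fun _ => 0); split; rewrite ?ssubst0. Qed.

Lemma in_kpow_geW a b f : (b <= a)%N -> in_kpow_ge a f -> in_kpow_ge b f.
Proof. by move=> ba [F [hF ->]]; exists F; split => // e he; apply: hF; apply: leq_trans he ba. Qed.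

Lemma in_kpow_geD d f g : in_kpow_ge d f -> in_kpow_ge d g -> in_kpow_ge d (f + g).
Proof.
move=> [F [hF ->]] [G [hG ->]]; exists (fun e => F e + G e); split; last by rewrite ssubstD.
by move=> e he; rewrite hF ?hG ?addr0.
Qed.

Lemma in_kpow_geB d f g : in_kpow_ge d f -> in_kpow_ge d g -> in_kpow_ge d (f - g).
Proof.
move=> hf [G [hG ->]]; rewrite -ssubstN; apply: in_kpow_geD => //.
by exists (fun e => - G e); split => // e he; rewrite hG ?oppr0.
Qed.

Lemma in_kpow_geZ d c f : in_kpow_ge d f -> in_kpow_ge d (sconst c * f).
Proof.
move=> [F [hF ->]]; exists (fun e => c * F e); split; last by rewrite ssubstZ.
by move=> e he; rewrite hF ?mulr0.
Qed.

Lemma in_kpow_geM a b f g : in_kpow_ge a f -> in_kpow_ge b g -> in_kpow_ge (a + b) (f * g).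
Proof.
move=> [F [hF ->]] [G [hG ->]]; exists (mmul F G); split; last by rewrite ssubstM.
exact: ord_geM.
Qed.

Lemma in_kpow_ge_sum d I (r : seq I) (P : pred I) (F : I -> fps) :
  (forall i, P i -> in_kpow_ge d (F i)) -> in_kpow_ge d (\sum_(i <- r | P i) F i).
Proof.
move=> h; elim/big_rec: _ => [|i x Pi hx]; first exact: in_kpow_ge0.
by apply: in_kpow_geD => //; apply: h.
Qed.

Lemma in_kpow_ge_val d f : in_kpow_ge d f -> val_ge f d.
Proof. by move=> [F [hF ->]]; apply: val_ge_ssubst. Qed.

Lemma in_kpow_ge_smonom (x : expo) : in_kpow_ge (deg x) (smonom z x).
Proof.
exists (fun e => if e == x then 1 else 0); split; last by rewrite ssubst_delta.
by move=> e he; case: eqP => // hx; move: he; rewrite hx ltnn.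
Qed.

Lemma in_kpow_ge1 : in_kpow_ge 0 1.
Proof.
by rewrite -smonom0; apply: in_kpow_geW (in_kpow_ge_smonom _).
Qed.

Lemma in_kpow_ge_gen i : in_kpow_ge 1 (z i).
Proof.
have := in_kpow_ge_smonom [ffun j => (j == i : nat)].
have -> : smonom z [ffun j => (j == i : nat)] = z i.
  rewrite smonomE big_enum (bigD1 i) //= big1 ?mulr1; first by rewrite ffunE eqxx expr1.
  by move=> j /negbTE hj; rewrite ffunE hj expr0.
by rewrite /deg (bigD1 i) //= big1 ?ffunE ?eqxx // => j /negbTE hj; rewrite ffunE hj.
Qed.

Lemma in_kpow_geX a f p : in_kpow_ge a f -> in_kpow_ge (a * p) (f ^+ p).
Proof.
move=> hf; elim: p => [|p ih]; first by rewrite muln0 expr0; apply: in_kpow_ge1.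
by rewrite exprS mulnS; apply: in_kpow_geM.
Qed.

Lemma in_kpow_ge1_coef0 f : in_kpow_ge 0 f -> f 0%N = 0 -> in_kpow_ge 1 f.
Proof.
move=> [F [_ ->]]; rewrite ssubst_coef0 => F0; exists F; split => // e.
by rewrite ltnS leqn0 => /eqP /deg_eq0 ->.
Qed.

End Substitution.

Lemma mulrBB (R : pzRingType) (a b a' b' : R) : a * b - a' * b' = a * (b - b') + (a - a') * b'.
Proof. by rewrite mulrBr mulrBl addrA subrK. Qed.

Section Perturbation.
Variables (k : fieldType) (n : nat) (z w : 'I_n -> fps k).
Hypothesis z0 : forall i, z i 0%N = 0.
Hypothesis w_ge1 : forall i, in_kpow_ge z 1 (w i).
Hypothesis zw_ge2 : forall i, in_kpow_ge z 2 (z i - w i).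

Lemma perturb_coef0 i : w i 0%N = 0.
Proof. by apply: (in_kpow_ge_val z0 (w_ge1 i)). Qed.

Lemma perturb_expX i p : in_kpow_ge z p.+1 (z i ^+ p - w i ^+ p).
Proof.
elim: p => [|p ih]; first by rewrite !expr0 subrr; apply: in_kpow_ge0.
rewrite !exprS mulrBB; apply: in_kpow_geD.
  by have := in_kpow_geM z0 (in_kpow_ge_gen z0 i) ih; rewrite add1n.
have := in_kpow_geM z0 (zw_ge2 i) (in_kpow_geX z0 p (w_ge1 i)).
by rewrite mul1n add2n.
Qed.

Lemma prod_perturb_ge (x : expo n) (s : seq 'I_n) :
  in_kpow_ge z (\sum_(i <- s) x i)%N (\prod_(i <- s) w i ^+ x i).
Proof.
elim: s => [|i s ih]; first by rewrite !big_nil; apply: in_kpow_ge1 z0.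
have w_pow := in_kpow_geX z0 (x i) (w_ge1 i); rewrite mul1n in w_pow.
by rewrite !big_cons; apply: (in_kpow_geM z0 w_pow ih).
Qed.

Lemma smonom_perturb_ge (x : expo n) : in_kpow_ge z (deg x) (smonom w x).
Proof. by rewrite smonomE -deg_enum; apply: prod_perturb_ge. Qed.

Lemma smonom_perturb_sub (x : expo n) :
  in_kpow_ge z (deg x).+1 ((smonom z x : fps k) - (smonom w x : fps k)).
Proof.
rewrite !smonomE -deg_enum; elim: (enum 'I_n) => [|i s ih].
  by rewrite !big_nil subrr; apply: in_kpow_ge0.
have z_pow := in_kpow_geX z0 (x i) (in_kpow_ge_gen z0 i); rewrite mul1n in z_pow.
rewrite !big_cons mulrBB; apply: in_kpow_geD; first by rewrite -addnS; apply: (in_kpow_geM z0 z_pow ih).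
by rewrite -addSn; apply: (in_kpow_geM z0 (perturb_expX i (x i)) (prod_perturb_ge x s)).
Qed.

Definition homog (H : expo n -> k) (j : nat) (e : expo n) : k :=
  if deg e == j then H e else 0.

Lemma ssubst_perturb_homog H j : ord_ge H j -> exists H1, ord_ge H1 j.+1 /\
  (ssubst H z : fps k) = (ssubst (homog H j) w : fps k) + (ssubst H1 z : fps k).
Proof.
move=> hH; set P := homog H j.
have hP (e : expo n) : (exists i, j.+1 <= e i)%N -> P e = 0.
  move=> [i hi]; rewrite /P /homog; case: eqP => // hd.
  by have := leq_trans hi (expo_le_deg e i); rewrite hd ltnn.
have split_P : (ssubst H z : fps k) = (ssubst P z : fps k) + ssubst (fun e => H e - P e) z.
  by rewrite -ssubstD; congr ssubst; apply: funext => e; rewrite addrC subrK.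
have P_ge : in_kpow_ge z j.+1 ((ssubst P z : fps k) - (ssubst P w : fps k)).
  rewrite (ssubst_poly z0 hP) (ssubst_poly perturb_coef0 hP) -sumrB.
  apply: in_kpow_ge_sum => e _; rewrite -mulrBr /P /homog; case: eqP => hd.
    by apply: in_kpow_geZ; have := smonom_perturb_sub (expo_of e); rewrite hd.
  by rewrite sconst0 mul0r; apply: in_kpow_ge0.
have rest_ge : in_kpow_ge z j.+1 (ssubst (fun e => H e - P e) z).
  exists (fun e => H e - P e); split => // e he; rewrite /P /homog.
  case: eqP => hd; first by rewrite subrr.
  by rewrite hH ?subr0 // ltn_neqAle -ltnS he andbT; apply/eqP.
have [H1 [h1 h2]] := in_kpow_geD P_ge rest_ge.
exists H1; split => //; rewrite -h2 split_P addrA; congr (_ + _).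
by rewrite addrC subrK.
Qed.

Fixpoint iter_homog (next : (expo n -> k) * nat -> expo n -> k) (H : expo n -> k) j :=
  if j is j'.+1 then next (iter_homog next H j', j') else H.

(* Apply [ssubst_perturb_homog] in every degree; the coefficient of [t^m] only sees degrees [<= m]. *)
Lemma in_kpow_perturb f : in_kpow_ge z 0 f -> in_kpow w f.
Proof.
move=> [H [_ ->]].
have hnext (p : (expo n -> k) * nat) : exists H1 : expo n -> k, ord_ge p.1 p.2 ->
    ord_ge H1 p.2.+1 /\
    (ssubst p.1 z : fps k) = (ssubst (homog p.1 p.2) w : fps k) + (ssubst H1 z : fps k).
  case: (EM (ord_ge p.1 p.2)) => hm; last by exists p.1.
  by have [H1 h1] := ssubst_perturb_homog hm; exists H1.
have [next hnextP] := choice hnext.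
pose Hs := iter_homog next H.
have Hs_ge j : ord_ge (Hs j) j.
  by elim: j => [|j ih] //=; have [] := hnextP (Hs j, j) ih.
have tele L : (ssubst H z : fps k) =
    \sum_(j < L) (ssubst (homog (Hs j) j) w : fps k) + (ssubst (Hs L) z : fps k).
  elim: L => [|L ih]; first by rewrite big_ord0 add0r.
  by rewrite big_ord_recr /= -addrA -(proj2 (hnextP (Hs L, L) (Hs_ge L))).
exists (fun e => Hs (deg e) e) => m.
rewrite (tele m.+1) fps_coefD (val_ge_ssubst z0 (Hs_ge m.+1)) // addr0.
rewrite -(@ssubst_sum _ _ w m.+1 (fun j => homog (Hs j) j)).
apply: (ssubst_coef_eq perturb_coef0) => e he.
rewrite (bigD1 (Ordinal (he : (deg e < m.+1)%N))) //= big1 ?addr0; first by rewrite /homog eqxx.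
move=> j hj; rewrite /homog; case: eqP => // hd; case/eqP: hj; apply: val_inj.
by rewrite /= hd.
Qed.

(* Below the conductor [C] only finitely many monomials in [w] matter, and they lie in k[[z]]. *)
Lemma in_kpow_ge_of_conductor C f :
  (forall h, val_ge h C -> in_kpow_ge z 0 h) -> in_kpow w f -> in_kpow_ge z 0 f.
Proof.
move=> hC [F /funext ->]; pose P e := if (deg e < C)%N then F e else 0.
have -> : (ssubst F w : fps k) = (ssubst P w : fps k) + ssubst (fun e => F e - P e) w.
  by rewrite -ssubstD; congr ssubst; apply: funext => e; rewrite addrC subrK.
apply: in_kpow_geD.
  have hP (e : expo n) : (exists i, C.+1 <= e i)%N -> P e = 0.
    move=> [i hi]; rewrite /P; case: ltnP => // hd.
    by have := leq_trans hi (expo_le_deg e i); rewrite leqNgt ltnS ltnW.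
  rewrite (ssubst_poly perturb_coef0 hP); apply: in_kpow_ge_sum => e _; apply: in_kpow_geZ.
  exact: in_kpow_geW (leq0n _) (smonom_perturb_ge _).
by apply: hC; apply: (val_ge_ssubst perturb_coef0) => e he; rewrite /P he subrr.
Qed.

End Perturbation.

Section Conductor.
Variables (k : fieldType) (n : nat) (z : 'I_n -> fps k).
Hypothesis z0 : forall i, z i 0%N = 0.

Section Greedy.
Variables (C b : nat) (s : nat -> fps k) (h : fps k).
Hypothesis b_gt0 : (0 < b)%N.
Hypothesis s_val : forall j, has_val (s (C + j)) (C + j).
Hypothesis s_ge : forall j, in_kpow_ge z (j %/ b) (s (C + j)).
Hypothesis h_val : val_ge h C.

(* Kill the coefficients of [h] one at a time using the [s (C + j)]; as [s (C + j)] has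
   [z]-order at least [j %/ b], the coefficient of each monomial in [z] is eventually fixed. *)
Definition greedy_coef (j : nat) (r : fps k) : k := r (C + j)%N / s (C + j)%N (C + j)%N.

Fixpoint greedy_rest (j : nat) : fps k :=
  if j is j'.+1 then greedy_rest j' - sconst (greedy_coef j' (greedy_rest j')) * s (C + j')%N
  else h.

Lemma greedy_rest_val j : val_ge (greedy_rest j) (C + j).
Proof.
elim: j => [|j ih] /=; first by rewrite addn0.
move=> i; rewrite addnS ltnS leq_eqVlt => /orP [/eqP ->|hi].
  by rewrite fps_coefB sconstME /greedy_coef mulfVK ?subrr //; case: (s_val j).
by rewrite fps_coefB sconstME ih // (proj1 (s_val j)) // mulr0 subr0.
Qed.

Lemma greedy_telescope J :
  h = \sum_(j < J) sconst (greedy_coef j (greedy_rest j)) * s (C + j)%N + greedy_rest J.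
Proof.
elim: J => [|J ih]; first by rewrite big_ord0 add0r.
by rewrite big_ord_recr /= {1}ih -addrA; congr (_ + _); rewrite addrC subrK.
Qed.

Lemma greedy_in_kpow : in_kpow_ge z 0 h.
Proof.
have [S hS] : exists S : nat -> expo n -> k, forall j,
    ord_ge (S j) (j %/ b) /\ s (C + j)%N = ssubst (S j) z.
  have [S hS] := choice (fun j => let: ex_intro H hH := s_ge j in ex_intro _ H hH).
  by exists S.
exists (fun e => \sum_(j < b * (deg e).+1) greedy_coef j (greedy_rest j) * S j e).
split => //; apply: funext => m; set J := (b * m.+1)%N.
have mJ : (m < J)%N by rewrite /J -{1}[m.+1]mul1n leq_mul2r b_gt0 orbT.
rewrite (@ssubst_coef_eq _ _ _ z0 _ (fun e => \sum_(j < J) greedy_coef j (greedy_rest j) * S j e)); last first.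
  move=> e he; rewrite (big_ord_widen J (fun j => greedy_coef j (greedy_rest j) * S j e)); last first.
    by rewrite leq_mul2l ltnS he orbT.
  rewrite big_rmcond //= => j; rewrite -leqNgt => hj.
  by rewrite (proj1 (hS j)) ?mulr0 // leq_divRL // mulnC.
rewrite (ssubst_sum z J (fun j e => greedy_coef j (greedy_rest j) * S j e)) fps_coef_sum.
rewrite {1}(greedy_telescope J) fps_coefD greedy_rest_val ?addr0 ?fps_coef_sum; last first.
  by apply: leq_trans mJ _; rewrite leq_addl.
by apply: eq_bigr => j _; rewrite ssubstZ -(proj2 (hS j)).
Qed.

End Greedy.

Hypothesis hbir : birational (in_kpow_ge z 0).

Lemma birational_val_pair : exists (u w : fps k) b,
  [/\ (0 < b)%N, in_kpow_ge z 1 u, in_kpow_ge z 1 w, has_val u b & has_val w b.+1].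
Proof.
have [f [g [Rf [Rg [g_neq0 fg]]]]] := hbir (svar k).
have {}fg : f = (svar k : fps k) * g by apply: funext.
have g_nz : exists i, g i != 0.
  apply: contrapT => hn; apply: g_neq0 => i; apply/eqP; apply: contrapT => /negP gi.
  by apply: hn; exists i.
case: (ex_minnP g_nz) => a ga amin.
have hg : has_val g a.
  split => // j ja; apply/eqP; apply: contrapT => /negP gj.
  by have := amin j gj; rewrite leqNgt ja.
have hf : has_val f a.+1 by rewrite fg -add1n; apply: has_valM => //; apply: has_val_svar.
have m_of (u : fps k) b : in_kpow_ge z 0 u -> has_val u b.+1 -> in_kpow_ge z 1 u.
  by move=> Ru hu; apply: in_kpow_ge1_coef0 => //; apply: (proj1 hu).
clear ga amin; case: a hg hf => [|a] hg hf.
  have m_f := m_of _ _ Rf hf.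
  exists (f : fps k), ((f : fps k) * f), 1%N.
  by split => //; [exact: (m_of _ _ (in_kpow_geM z0 Rf Rf) (has_valM hf hf)) | exact: (has_valM hf hf)].
by exists (g : fps k), (f : fps k), a.+1; split => //; [exact: (m_of _ _ Rg hg) | exact: (m_of _ _ Rf hf)].
Qed.

(* With [u] of value [b] and [w] of value [b + 1], every [N >= b^2] is the value of
   [u ^+ (N %/ b - N %% b) * w ^+ (N %% b)]. *)
Lemma conductor : exists C, (0 < C)%N /\ forall h, val_ge h C -> in_kpow_ge z 0 h.
Proof.
have [u [w [b [b_gt0 mu mw hu hw]]]] := birational_val_pair.
pose s N := u ^+ (N %/ b - N %% b) * w ^+ (N %% b).
have s_ok j : has_val (s (b * b + j)%N) (b * b + j) /\ in_kpow_ge z (j %/ b) (s (b * b + j)%N).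
  set N := (b * b + j)%N.
  have mod_lt : (N %% b < b)%N by rewrite ltn_mod.
  have div_ge : (b <= N %/ b)%N by rewrite leq_divRL // leq_addr.
  have mod_le : (N %% b <= N %/ b)%N by apply: ltnW; apply: leq_trans mod_lt div_ge.
  split.
    have := has_valM (has_valX (N %/ b - N %% b) hu) (has_valX (N %% b) hw).
    suff -> : (b * (N %/ b - N %% b) + b.+1 * (N %% b))%N = N by [].
    have := divn_eq N b; have : (b * (N %% b) <= b * (N %/ b))%N by rewrite leq_mul2l mod_le orbT.
    rewrite mulnBr mulSn; lia.
  have := in_kpow_geM z0 (in_kpow_geX z0 (N %/ b - N %% b) mu) (in_kpow_geX z0 (N %% b) mw).
  rewrite !mul1n (subnK mod_le) => s_ge; apply: in_kpow_geW s_ge.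
  by apply: leq_div2r; rewrite leq_addl.
exists (b * b)%N; split => [|h hh]; first by rewrite muln_gt0 b_gt0.
by apply: (@greedy_in_kpow (b * b) b s h b_gt0) => // j; case: (s_ok j).
Qed.

End Conductor.

Lemma birational_ext (k : fieldType) (P Q : series k -> Prop) :
  (forall f, P f <-> Q f) -> birational P -> birational Q.
Proof.
move=> PQ hP h; have [f [g [Pf [Pg hfg]]]] := hP h.
by exists f, g; rewrite -!PQ.
Qed.

Section HerzogKunz.
Variables (k : fieldType) (R : series k -> Prop) (n : nat) (y : 'I_n -> fps k) (an : nat).
Hypothesis hR : forall f, R f <-> in_kpow y f.
Hypothesis y0 : forall i, y i 0%N = 0.
Hypothesis hbir : birational R.
Hypothesis an_max : forall a, herzog_kunz R a -> (a <= an)%N.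

Lemma R_in_kpow_ge0 f : R f <-> in_kpow_ge y 0 f.
Proof.
rewrite hR; split => [[F /funext hF]|[F [_ ->]]]; last by exists F.
by exists F.
Qed.

Lemma maxideal_in_kpow_ge1 f : maxideal R f <-> in_kpow_ge y 1 f.
Proof.
split => [[/R_in_kpow_ge0 Rf f0]|hf]; first exact: in_kpow_ge1_coef0.
by split; [apply/R_in_kpow_ge0; apply: in_kpow_geW hf | apply: (in_kpow_ge_val y0 hf)].
Qed.

Lemma maxidealB (f g : fps k) : maxideal R f -> maxideal R g -> maxideal R (f - g).
Proof. by rewrite !maxideal_in_kpow_ge1; apply: in_kpow_geB. Qed.

Definition in_msq (g : fps k) := exists s : seq (series k * series k),
  (forall p, List.In p s -> maxideal R p.1 /\ maxideal R p.2) /\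
  g = \sum_(p <- s) (p.1 : fps k) * p.2.

Lemma maxideal2E g : maxideal2 R g <-> in_msq g.
Proof.
have foldE (s : seq (series k * series k)) :
    foldr (fun p acc => sadd (smul p.1 p.2) acc) (szero k) s = \sum_(p <- s) (p.1 : fps k) * p.2.
  by elim: s => [|p s ih] /=; rewrite ?big_nil ?big_cons -?ih.
by split=> [[s [h1 /funext h2]]|[s [h1 h2]]]; exists s; rewrite ?foldE ?h2.
Qed.

Lemma in_msq_ge2 g : in_msq g -> in_kpow_ge y 2 g.
Proof.
move=> [s [hs ->]]; elim: s hs => [|p s ih] hs; first by rewrite big_nil; apply: in_kpow_ge0.
rewrite big_cons; apply: in_kpow_geD; last by apply: ih => q hq; apply: hs; right.
have [/maxideal_in_kpow_ge1 h1 /maxideal_in_kpow_ge1 h2] := hs p (or_introl erefl).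
exact: (in_kpow_geM y0 h1 h2).
Qed.

Lemma in_msqD g1 g2 : in_msq g1 -> in_msq g2 -> in_msq (g1 + g2).
Proof.
move=> [s1 [h1 ->]] [s2 [h2 ->]]; exists (s1 ++ s2); split; last by rewrite big_cat.
by move=> p hp; case: (List.in_app_or _ _ _ hp) => hq; [apply: h1 | apply: h2].
Qed.

Lemma in_msqZ c g : in_msq g -> in_msq (sconst c * g).
Proof.
move=> [s [hs ->]]; exists [seq ((sconst c * p.1 : fps k) : series k, p.2) | p <- s]; split.
  move=> p /List.in_map_iff [q [<- hq]] /=; have [/maxideal_in_kpow_ge1 h1 h2] := hs q hq.
  by split => //; apply/maxideal_in_kpow_ge1; apply: in_kpow_geZ.
by rewrite big_map mulr_sumr; apply: eq_bigr => p _ /=; rewrite mulrA.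
Qed.

Lemma in_msqM f g : maxideal R f -> maxideal R g -> in_msq ((f : fps k) * g).
Proof.
move=> hf hg; exists [:: (f, g)]; split; last by rewrite big_cons big_nil addr0.
by move=> p [<-|[]].
Qed.

(* With [C] the conductor, [g = t^C * (g / t^C)] is a product of two elements of [m]. *)
Lemma in_msq_val_ge : exists C, forall g, val_ge g C -> in_msq g.
Proof.
have [C [C_gt0 hC]] := conductor y0 (birational_ext R_in_kpow_ge0 hbir).
exists (C + C)%N => g hg; pose g' : fps k := fun m => g (m + C)%N.
have -> : g = (svar k : fps k) ^+ C * g'.
  apply: funext => m; rewrite coef_svarXM; case: leqP => hm; first by rewrite /g' subnK.
  by rewrite hg //; apply: leq_trans hm _; rewrite leq_addl.
have [tC_val tC_nz] := has_valX C (has_val_svar k); rewrite mul1n in tC_val tC_nz.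
apply: in_msqM; split.
- by apply/R_in_kpow_ge0; apply: hC.
- exact: tC_val.
- by apply/R_in_kpow_ge0; apply: hC => j hj; rewrite /g' hg //; lia.
- by rewrite /g' add0n hg // -{1}[C]addn0 ltn_add2l.
Qed.

(* Above [a_n], every value of [m] is a value of [m^2], so the leading term of [g] can be
   cancelled by an element of [m^2]. *)
Lemma in_msq_kill_coef (g : fps k) v : maxideal R g -> (an < v)%N -> val_ge g v ->
  exists q, in_msq q /\ val_ge (g - q) v.+1.
Proof.
move=> hg hv gv; have vS j : (j < v.+1)%N -> j = v \/ (j < v)%N.
  by rewrite ltnS leq_eqVlt => /orP [/eqP|]; [left|right].
case: (eqVneq (g v) 0) => gv0.
  exists 0; split; first by exists [::]; rewrite big_nil.
  by rewrite subr0 => j /vS [->|/gv].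
have [q [/maxideal2E mq [q_val q_nz]]] : in_valset (maxideal2 R) v.
  apply: contrapT => hn; have := an_max (conj (ex_intro _ g (conj hg (conj gv gv0))) hn).
  by rewrite leqNgt hv.
exists (sconst (g v / q v) * q); split; first exact: in_msqZ.
move=> j /vS [->|hj]; first by rewrite fps_coefB sconstME mulfVK ?subrr.
by rewrite fps_coefB sconstME (gv j hj) (q_val j hj) mulr0 subr0.
Qed.

Lemma maxideal_val_gt_msq (g : fps k) : maxideal R g -> val_ge g an.+1 -> in_msq g.
Proof.
have [C hC] := in_msq_val_ge.
suff ind d : forall (g : fps k) v, (C <= v + d)%N -> (an < v)%N -> maxideal R g -> val_ge g v -> in_msq g.
  by move=> hg hga; apply: (ind C g an.+1) => //; rewrite leq_addl.
elim: d => [|d ih] {}g v hvd hv hg gv; first by apply: hC; apply: val_geW gv; rewrite -[v]addn0.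
have [q [mq qv]] := in_msq_kill_coef hg hv gv.
rewrite -(subrK q g); apply: (in_msqD _ mq); apply: (ih _ v.+1) => //; first by rewrite addSnnS.
  exact: ltnW.
by apply: maxidealB => //; apply/maxideal_in_kpow_ge1; apply: in_kpow_geW (in_msq_ge2 mq).
Qed.

End HerzogKunz.

(* Finiteness of the normalization and [a_n] being a Herzog-Kunz value are not needed:
   completeness and birationality already give the conductor. *)
Theorem mainTheorem14 (k : fieldType) (R : series k -> Prop) (n : nat)
  (y yt : 'I_n -> series k) (an : nat)
  (hR : forall f, R f <-> in_kpow y f)
  (hfin : finite_over R) (hbir : birational R)
  (hy : minimal_generators R y)
  (han : herzog_kunz R an) (hanmax : forall a, herzog_kunz R a -> (a <= an)%N)
  (hytR : forall i, R (yt i))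
  (hyt : forall i, val_ge (ssub (y i) (yt i)) an.+1) :
  forall f, R f <-> in_kpow yt f.
Proof.
have y0 i : y i 0%N = 0 by case: (hy.1 i).
have yt_ge1 i : in_kpow_ge y 1 (yt i).
  apply/(maxideal_in_kpow_ge1 hR y0); split => //.
  by have := hyt i 0%N isT; rewrite /ssub y0 sub0r => /eqP; rewrite oppr_eq0 => /eqP.
have diff_ge2 i : in_kpow_ge y 2 ((y i : fps k) - (yt i : fps k)).
  apply: (in_msq_ge2 hR y0); apply: (maxideal_val_gt_msq hR y0 hbir hanmax) (hyt i).
  by apply/(maxideal_in_kpow_ge1 hR y0); apply: in_kpow_geB (in_kpow_ge_gen y0 i) (yt_ge1 i).
have [C [_ hC]] := conductor y0 (birational_ext (R_in_kpow_ge0 hR) hbir).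
move=> f; rewrite (R_in_kpow_ge0 hR); split; first exact: (in_kpow_perturb y0 yt_ge1 diff_ge2).
exact: (in_kpow_ge_of_conductor y0 yt_ge1 hC).
Qed.
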